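(* For $m\in\mathbb{N}$ let $A_m,B_m\in\mathbb{R}^{m\times m}$ be given by $(A_m)_{ij}=1$ if $|i-j|=1$ and $0$ otherwise, and $(B_m)_{ij}=1$ if $j=i+1$, $(B_m)_{ij}=-1$ if $j=i-1$, and $0$ otherwise. Let $e_1,e_m$ be the first and last standard basis vectors of $\mathbb{R}^m$ and set \[ \tilde A=A_m+e_1e_1^T-e_me_m^T,\quad \tilde B=B_m+e_1e_1^T+e_me_m^T,\quad \hat A=-A_m+e_1e_1^T-e_me_m^T. \] For real $c\ge 0$ let \[ \tilde H_c(m)=\begin{bmatrix}\tilde A+2cI & \tilde B\\ \tilde B^T & \hat A-2cI\end{bmatrix}\in\mathbb{R}^{2m\times 2m}. \] Then for all $m\in\mathbb{N}$ and $c\ge 0$ the eigenvalues of $\tilde H_c(m)$ come in plus/minus pairs (counting multiplicity), and $(-2|c-1|,2|c-1|)\cap\sigma(\tilde H_c(m))=\emptyset$. Moreover, $(-2|c-1|,2|c-1|)$ is the largest interval with this property: for every $\epsilon>0$ there is $m$ such that $(-2|c-1|-\epsilon,2|c-1|+\epsilon)\cap\sigma(\tilde H_c(m))\neq\emptyset$.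
   Context: $\sigma$ denotes the spectrum. *)

From HB Require Import structures.
From mathcomp Require Import all_boot all_order all_algebra.
From mathcomp Require Import reals.
Set Implicit Arguments. Unset Strict Implicit. Unset Printing Implicit Defensive.
Import Order.TTheory GRing.Theory Num.Theory.
Local Open Scope ring_scope.

(* Indices i : 'I_m correspond to the paper's 1..m via i+1.
   e_1 <-> index 0, e_m <-> index m-1. *)
Section Mats.
Variable R : realType.
Variable m : nat.

Definition ind (b : bool) : R := if b then 1 else 0.

Definition A_m : 'M[R]_m :=
  \matrix_(i, j) ind ((i.+1 == j :> nat) || (j.+1 == i :> nat)).
Definition B_m : 'M[R]_m :=
  \matrix_(i, j) (ind (i.+1 == j :> nat) - ind (j.+1 == i :> nat)).

Definition E11 : 'M[R]_m := \matrix_(i, j) ind ((i == 0%N :> nat) && (j == 0%N :> nat)).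
Definition Emm : 'M[R]_m := \matrix_(i, j) ind ((i == m.-1 :> nat) && (j == m.-1 :> nat)).

Definition Atil : 'M[R]_m := A_m + E11 - Emm.
Definition Btil : 'M[R]_m := B_m + E11 + Emm.
Definition Ahat : 'M[R]_m := - A_m + E11 - Emm.

Definition Htil (c : R) : 'M[R]_(m + m) :=
  block_mx (Atil + (2 * c)%:M) Btil Btil^T (Ahat - (2 * c)%:M).
End Mats.

From HB Require Import structures.
From mathcomp Require Import all_boot all_order all_algebra.
From mathcomp Require Import reals trigo.
From mathcomp Require Import zify ring lra.
Import Order.TTheory GRing.Theory Num.Theory.
Local Open Scope ring_scope.
Set Implicit Arguments. Unset Strict Implicit. Unset Printing Implicit Defensive.

(* Write S for the shift matrix and E, F for the corner projections e_1 e_1^T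
   and e_m e_m^T, so that Atil, Btil and Ahat are linear in S, S^T, E, F.  The
   multiplication table of these four matrices gives
     Htil_c^2 = 4 (c - 1)^2 I + 4 c diag(2 I + Atil, 2 I - Ahat),
   where both diagonal blocks are sums of Gram matrices, hence positive
   semidefinite: every eigenvalue lam satisfies lam^2 >= 4 (c - 1)^2.
   With the exchange matrix J, the invertible block matrix [0 J; -J 0]
   anticommutes with Htil_c, so its characteristic polynomial is even or odd,
   which pairs lam with -lam.  For sharpness, the alternating sine vector
   w_i = (-1)^i sin ((2i + 1) pi / 4m) is an eigenvector of Atil for the
   eigenvalue -2 cos (pi / 2m); thus (w, 0) is an eigenvector of Htil_c^2 for
   4 (c - 1)^2 + 8 c (1 - cos (pi / 2m)), which tends to 4 (c - 1)^2. *)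

Section MatrixSpectrum.
Variable R : fieldType.

Lemma char_poly_comp_oppX n (M : 'M[R]_n) :
  char_poly M \Po (- 'X) = (-1) ^+ n *: char_poly (- M).
Proof.
rewrite /char_poly /char_poly_mx -det_map_mx.
have -> : map_mx (comp_poly (- 'X)) ('X%:M - map_mx polyC M)
    = - ('X%:M - map_mx polyC (- M)).
  rewrite map_mxB map_scalar_mx /= comp_polyX.
  apply/matrixP => i j; rewrite !mxE comp_polyC.
  by rewrite polyCN opprK opprD mulNrn.
by rewrite -scaleN1r detZ -mul_polyC polyC_exp polyCN polyC1.
Qed.

Lemma char_polyN_anticomm n (M P : 'M[R]_n) :
  P \in unitmx -> P *m M = - (M *m P) -> char_poly (- M) = char_poly M.
Proof.
rewrite unitmxE unitfE => detP PM.
have conj : map_mx polyC P *m char_poly_mx M = char_poly_mx (- M) *m map_mx polyC P.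
  rewrite /char_poly_mx mulmxBr mulmxBl mul_mx_scalar mul_scalar_mx -!map_mxM PM.
  by rewrite mulNmx map_mxN.
have := congr1 determinant conj; rewrite !det_mulmx det_map_mx /char_poly => h.
apply/esym; apply: (@mulfI _ (\det P)%:P); first by rewrite polyC_eq0.
by rewrite h mulrC.
Qed.

Lemma mup_comp_oppX (p : {poly R}) (a : R) : p != 0 -> a != 0 ->
  p \Po (- 'X) = a *: p -> forall l, mup l p = mup (- l) p.
Proof.
move=> pnz anz pN.
suff le_mup l : (mup l p <= mup (- l) p)%N.
  by move=> l; apply/eqP; rewrite eqn_leq le_mup -{2}(opprK l) le_mup.
have dvd_p : ('X - l%:P) ^+ mup l p %| p by rewrite -mup_geq.
have := dvdp_comp_poly (- 'X) dvd_p.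
rewrite pN rmorphXn /= comp_polyB comp_polyX comp_polyC.
rewrite (_ : - 'X - l%:P = - ('X - (- l)%:P)); last by rewrite polyCN opprB addrC.
by rewrite -scaleN1r exprZn dvdpZl ?signr_eq0 // dvdpZr // -mup_geq.
Qed.

Lemma eigenvalue_of_sqr n (M : 'M[R]_n) (v : 'rV[R]_n) (s : R) : v != 0 ->
  v *m (M *m M) = s ^+ 2 *: v -> eigenvalue M s \/ eigenvalue M (- s).
Proof.
move=> vnz vMM.
have factor : v *m ((M - s%:M) *m (M + s%:M)) = 0.
  rewrite mulmxDr !mulmxBl mul_mx_scalar mul_scalar_mx -scalar_mxM -expr2.
  by rewrite addrA subrK mulmxBr vMM mul_mx_scalar subrr.
have [w0|wnz] := eqVneq (v *m (M - s%:M)) 0.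
- left; apply/eigenvalueP; exists v => //.
  by move/eqP: w0; rewrite mulmxBr mul_mx_scalar subr_eq0 => /eqP.
- right; apply/eigenvalueP; exists (v *m (M - s%:M)) => //.
  move: factor; rewrite mulmxA mulmxDr mul_mx_scalar => /eqP.
  by rewrite addr_eq0 => /eqP ->; rewrite scaleNr.
Qed.
End MatrixSpectrum.

Section RayleighQuotient.
Variable R : realFieldType.

Lemma dotmx_ge0 n (u : 'rV[R]_n) : 0 <= (u *m u^T) 0 0.
Proof. by rewrite !mxE; apply: sumr_ge0 => k _; rewrite !mxE -expr2 sqr_ge0. Qed.

Lemma dotmx_gt0 n (u : 'rV[R]_n) : u != 0 -> 0 < (u *m u^T) 0 0.
Proof.
move=> unz; rewrite lt_neqAle dotmx_ge0 andbT eq_sym; apply: contra unz.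
rewrite !mxE psumr_eq0; last by move=> k _; rewrite !mxE -expr2 sqr_ge0.
move/allP => u0; apply/eqP/matrixP => i k; rewrite !mxE (ord1 i).
by have := u0 k (mem_index_enum k); rewrite !mxE -expr2 sqrf_eq0 => /eqP.
Qed.

Lemma gram_quad_ge0 n p (X : 'M[R]_(n, p)) (w : 'rV[R]_n) :
  0 <= (w *m (X *m X^T) *m w^T) 0 0.
Proof. by rewrite mulmxA -(mulmxA (w *m X)) -trmx_mul dotmx_ge0. Qed.

Lemma eigenvalue_sqr_ge n (M D : 'M[R]_n) (a l : R) :
  M *m M = a%:M + D -> (forall v : 'rV_n, 0 <= (v *m D *m v^T) 0 0) ->
  eigenvalue M l -> a <= l ^+ 2.
Proof.
move=> MM D_ge0 /eigenvalueP [v vM vnz].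
have vMM : v *m (M *m M) = l ^+ 2 *: v.
  by rewrite mulmxA vM -scalemxAl vM scalerA expr2.
have := congr1 (fun N => (N *m v^T) 0 0) vMM.
rewrite /= MM mulmxDr mul_mx_scalar mulmxDl -!scalemxAl.
have addE (A B : 'M[R]_1) : (A + B) 0 0 = A 0 0 + B 0 0 by rewrite mxE.
have scaleE k (A : 'M[R]_1) : (k *: A) 0 0 = k * A 0 0 by rewrite mxE.
rewrite addE !scaleE.
have := dotmx_gt0 vnz; have := D_ge0 v; nra.
Qed.

End RayleighQuotient.

Section IndicatorSums.
Variables (R : realType) (m : nat).

Lemma ind_mul (a b : bool) : ind R a * ind R b = ind R (a && b).
Proof. by rewrite /ind; case: a; case: b; rewrite ?mulr1 ?mulr0. Qed.

Lemma sum_mul_ind (f : nat -> R) (P : 'I_m -> bool) (a : nat) (Q : bool) :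
  (forall k : 'I_m, P k = ((k : nat) == a) && Q) ->
  \sum_(k < m) f k * ind R (P k) = if (a < m)%N then f a * ind R Q else 0.
Proof.
move=> PE; under eq_bigr => k _ do rewrite PE -ind_mul mulrCA.
rewrite -(big_mkord xpredT (fun k => ind R (k == a) * (f k * ind R Q))).
clear P PE; elim: m => [|n IH]; first by rewrite big_geq.
rewrite big_nat_recr //= IH /ind.
case: (ltngtP a n) => [lt_an|gt_an|<-]; rewrite ?mul0r ?mul1r ?addr0 ?add0r.
- by rewrite ltnS ltnW.
- by rewrite ltnS leqNgt gt_an.
- by rewrite ltnSn.
Qed.

Lemma sum_ind (P : 'I_m -> bool) (a : nat) (Q : bool) :
  (forall k : 'I_m, P k = ((k : nat) == a) && Q) ->
  \sum_(k < m) ind R (P k) = if (a < m)%N then ind R Q else 0.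
Proof.
move=> PE; under eq_bigr do rewrite -[ind R _]mul1r.
by rewrite (sum_mul_ind (fun=> 1) PE) mul1r.
Qed.

Lemma mulrn_eq_ord (i j : 'I_m) (a : R) : a *+ (i == j) = a * ind R (i == j :> nat).
Proof. by rewrite /ind -val_eqE /=; case: (_ == _); rewrite ?mulr1 ?mulr0. Qed.

End IndicatorSums.

Local Ltac expand_mulmx :=
  rewrite ?(mulmxDl, mulmxDr, mulmxBl, mulmxBr, mulNmx, mulmxN, opprK,
            mul1mx, mulmx1, mul0mx, mulmx0, mul_mx_scalar, mul_scalar_mx).
Local Ltac compare_entries :=
  apply/matrixP => i j; rewrite !mxE ?mulrn_eq_ord; lra.

Section ShiftAlgebra.
Variables (R : realType) (m : nat).

Definition shift_mx : 'M[R]_m := \matrix_(i, j) ind R (i.+1 == j :> nat).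
Definition exchange_mx : 'M[R]_m := \matrix_(i, j) ind R (i + j == m.-1 :> nat)%N.

Local Notation S := shift_mx.
Local Notation J := exchange_mx.
Local Notation E := (E11 R m).
Local Notation F := (Emm R m).

Lemma A_m_shift : A_m R m = S + S^T.
Proof.
apply/matrixP => i j; rewrite !mxE /ind.
by case: eqP; case: eqP => //= *; rewrite ?addr0 ?add0r //; lia.
Qed.

Lemma B_m_shift : B_m R m = S - S^T.
Proof. by apply/matrixP => i j; rewrite !mxE. Qed.

(* The entries of S, S^T, E, F and J are indicators, so an entry of a product
   of two of them is a sum of indicators of conjunctions, at most one of which
   can hold; [collapse_sum a Q] names the only candidate index [a] and the
   condition [Q] left once the summation index equals [a]. *)
Local Ltac case_ind := rewrite /ind; repeat (case: ifP => ?);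
  rewrite ?mulr1 ?mulr0 ?subr0 ?sub0r ?subrr; try lra; try lia.
Local Ltac expand_sum := under eq_bigr => k _ do rewrite !mxE ind_mul.
Local Ltac entrywise := apply/matrixP => i j; rewrite !mxE; expand_sum.
Local Ltac collapse_sum a Q := rewrite (@sum_ind _ _ _ a Q);
  [| move=> k; have := ltn_ord k; have := ltn_ord i; have := ltn_ord j; lia].
Local Ltac decide_entry := rewrite ?mxE ?mulrn_eq_ord;
  have := ltn_ord i; have := ltn_ord j; move=> ? ?; case_ind.

Lemma mul_shift_tr : S *m S^T = 1%:M - F.
Proof. entrywise; collapse_sum i.+1 (j.+1 == i.+1)%N; decide_entry. Qed.
Lemma mul_tr_shift : S^T *m S = 1%:M - E.
Proof. entrywise; collapse_sum i.-1 ((0 < i) && (i.-1.+1 == j))%N; decide_entry. Qed.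
Lemma mul_shift_E11 : S *m E = 0.
Proof. entrywise; collapse_sum i.+1 false; decide_entry. Qed.
Lemma mul_tr_shift_Emm : S^T *m F = 0.
Proof. entrywise; collapse_sum m.-1 false; decide_entry. Qed.
Lemma mul_E11_tr_shift : E *m S^T = 0.
Proof. entrywise; collapse_sum 0%N false; decide_entry. Qed.
Lemma mul_Emm_shift : F *m S = 0.
Proof. entrywise; collapse_sum m.-1 false; decide_entry. Qed.
Lemma E11_idem : E *m E = E.
Proof. entrywise; collapse_sum 0%N ((i == 0 :> nat) && (j == 0 :> nat))%N; decide_entry. Qed.
Lemma Emm_idem : F *m F = F.
Proof. entrywise; collapse_sum m.-1 ((i == m.-1 :> nat) && (j == m.-1 :> nat)); decide_entry. Qed.

Lemma exchange_mxK : J *m J = 1%:M.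
Proof. entrywise; collapse_sum (m.-1 - i)%N (m.-1 - i + j == m.-1)%N; decide_entry. Qed.
Lemma exchange_shift : J *m S = S^T *m J.
Proof.
entrywise; collapse_sum (m.-1 - i)%N ((m.-1 - i).+1 == j)%N.
expand_sum; collapse_sum (m.-1 - j)%N ((m.-1 - j).+1 == i)%N; decide_entry.
Qed.
Lemma exchange_tr_shift : J *m S^T = S *m J.
Proof.
entrywise; collapse_sum (m.-1 - i)%N (j.+1 == m.-1 - i)%N.
expand_sum; collapse_sum i.+1 (i.+1 + j == m.-1)%N; decide_entry.
Qed.
Lemma exchange_E11 : J *m E = F *m J.
Proof.
entrywise; collapse_sum 0%N ((i == m.-1 :> nat) && (j == 0 :> nat)).
expand_sum; collapse_sum m.-1 ((i == m.-1 :> nat) && (j == 0 :> nat)); decide_entry.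
Qed.
Lemma exchange_Emm : J *m F = E *m J.
Proof.
entrywise; collapse_sum m.-1 ((i == 0 :> nat) && (j == m.-1 :> nat)).
expand_sum; collapse_sum 0%N ((i == 0 :> nat) && (j == m.-1 :> nat)); decide_entry.
Qed.

Lemma tr_E11 : E^T = E.
Proof. by apply/matrixP => i j; rewrite !mxE andbC. Qed.
Lemma tr_Emm : F^T = F.
Proof. by apply/matrixP => i j; rewrite !mxE andbC. Qed.

Lemma Atil_shift : Atil R m = S + S^T + E - F.
Proof. by rewrite /Atil A_m_shift. Qed.
Lemma Ahat_shift : Ahat R m = - (S + S^T) + E - F.
Proof. by rewrite /Ahat A_m_shift. Qed.
Lemma Btil_shift : Btil R m = S - S^T + E + F.
Proof. by rewrite /Btil B_m_shift. Qed.
Lemma tr_Btil_shift : (Btil R m)^T = S^T - S + E + F.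
Proof. by rewrite Btil_shift !raddfD /= raddfN /= trmxK tr_E11 tr_Emm. Qed.

Local Ltac shift_table := rewrite ?(mul_shift_tr, mul_tr_shift, mul_shift_E11,
  mul_tr_shift_Emm, mul_E11_tr_shift, mul_Emm_shift, E11_idem, Emm_idem).
Local Ltac exchange_table :=
  rewrite ?(exchange_shift, exchange_tr_shift, exchange_E11, exchange_Emm).

Local Notation At := (Atil R m).
Local Notation Bt := (Btil R m).
Local Notation Ah := (Ahat R m).

Lemma Atil_sqr_add_Btil : At *m At + Bt *m Bt^T = 4%:M.
Proof.
by rewrite tr_Btil_shift Atil_shift Btil_shift; expand_mulmx; shift_table; compare_entries.
Qed.
Lemma Atil_Btil_anticomm : At *m Bt + Bt *m Ah = 0.
Proof.
by rewrite Atil_shift Btil_shift Ahat_shift; expand_mulmx; shift_table; compare_entries.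
Qed.
Lemma tr_Btil_Atil_anticomm : Bt^T *m At + Ah *m Bt^T = 0.
Proof.
by rewrite tr_Btil_shift Atil_shift Ahat_shift; expand_mulmx; shift_table; compare_entries.
Qed.
Lemma tr_Btil_add_Ahat_sqr : Bt^T *m Bt + Ah *m Ah = 4%:M.
Proof.
by rewrite tr_Btil_shift Btil_shift Ahat_shift; expand_mulmx; shift_table; compare_entries.
Qed.

Lemma exchange_tr_Btil : J *m Bt^T = Bt *m J.
Proof. by rewrite tr_Btil_shift Btil_shift; expand_mulmx; exchange_table; compare_entries. Qed.
Lemma exchange_Btil : J *m Bt = Bt^T *m J.
Proof. by rewrite tr_Btil_shift Btil_shift; expand_mulmx; exchange_table; compare_entries. Qed.
Lemma exchange_Atil : J *m At = - (Ah *m J).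
Proof. by rewrite Atil_shift Ahat_shift; expand_mulmx; exchange_table; compare_entries. Qed.
Lemma exchange_Ahat : J *m Ah = - (At *m J).
Proof. by rewrite Atil_shift Ahat_shift; expand_mulmx; exchange_table; compare_entries. Qed.

Lemma Atil_gram : 2%:M + At = (1%:M + S) *m (1%:M + S)^T + E *m E^T.
Proof.
rewrite Atil_shift [(_ + S)^T]raddfD /= tr_scalar_mx tr_E11.
by expand_mulmx; shift_table; compare_entries.
Qed.
Lemma Ahat_gram : 2%:M - Ah = (1%:M + S^T) *m (1%:M + S^T)^T + F *m F^T.
Proof.
rewrite Ahat_shift [(_ + S^T)^T]raddfD /= tr_scalar_mx trmxK tr_Emm.
by expand_mulmx; shift_table; compare_entries.
Qed.
End ShiftAlgebra.

Section HtilBlocks.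
Variables (R : realType) (m : nat) (c : R).
Local Notation At := (Atil R m).
Local Notation Bt := (Btil R m).
Local Notation Ah := (Ahat R m).
Local Notation H := (Htil m c).

Definition gap_defect_mx : 'M[R]_(m + m) := block_mx (2%:M + At) 0 0 (2%:M - Ah).

Lemma Htil_sqr : H *m H = (4 * (c - 1) ^+ 2)%:M + (4 * c) *: gap_defect_mx.
Proof.
rewrite /Htil /gap_defect_mx mulmx_block (scalar_mx_block m m) scale_block_mx.
rewrite add_block_mx.
have AA : At *m At = 4%:M - Bt *m Bt^T by rewrite -Atil_sqr_add_Btil addrK.
have BA : Bt *m Ah = - (At *m Bt).
  by apply/eqP; rewrite -subr_eq0 opprK addrC Atil_Btil_anticomm.
have AB : Ah *m Bt^T = - (Bt^T *m At).
  by apply/eqP; rewrite -subr_eq0 opprK addrC tr_Btil_Atil_anticomm.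
have AhAh : Ah *m Ah = 4%:M - Bt^T *m Bt.
  by rewrite -tr_Btil_add_Ahat_sqr addrAC subrr add0r.
move: At Bt Ah AA BA AB AhAh => A B A' AA BA AB A'A'.
by congr block_mx; expand_mulmx; rewrite ?(AA, BA, AB, A'A'); compare_entries.
Qed.

Definition chiral_mx : 'M[R]_(m + m) :=
  block_mx 0 (exchange_mx R m) (- exchange_mx R m) 0.

Lemma chiral_mx_anticomm : chiral_mx *m H = - (H *m chiral_mx).
Proof.
rewrite /Htil /chiral_mx !mulmx_block opp_block_mx.
move: (exchange_tr_Btil R m) (exchange_Ahat R m) (exchange_Atil R m) (exchange_Btil R m).
move: At Bt Ah (exchange_mx R m) => A B A' J JBT JA' JA JB.
by congr block_mx; expand_mulmx; rewrite ?(JBT, JA', JA, JB); compare_entries.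
Qed.

Lemma chiral_mx_unit : chiral_mx \in unitmx.
Proof.
apply: (proj1 (@mulmx1_unit _ _ _ (- chiral_mx) _)).
rewrite /chiral_mx opp_block_mx mulmx_block (scalar_mx_block m m).
by rewrite !(mul0mx, mulmx0, mulmxN, mulNmx, exchange_mxK, add0r, addr0, opprK, oppr0).
Qed.

Lemma gap_defect_quad_ge0 (v : 'rV[R]_(m + m)) : 0 <= (v *m gap_defect_mx *m v^T) 0 0.
Proof.
rewrite -(hsubmxK v) /gap_defect_mx mul_row_block !mulmx0 addr0 add0r tr_row_mx mul_row_col.
rewrite Atil_gram Ahat_gram.
move: (1%:M + _) (1%:M + _) (E11 R m) (Emm R m) => X1 X2 X3 X4.
have addE (A B : 'M[R]_1) : (A + B) 0 0 = A 0 0 + B 0 0 by rewrite mxE.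
by rewrite !mulmxDr !mulmxDl !addE !addr_ge0 ?gram_quad_ge0.
Qed.

End HtilBlocks.

Lemma Htil_mup_oppr (R : realType) (m : nat) (c l : R) :
  mup l (char_poly (Htil m c)) = mup (- l) (char_poly (Htil m c)).
Proof.
apply: (@mup_comp_oppX _ _ ((-1) ^+ (m + m))).
- exact/monic_neq0/char_poly_monic.
- by rewrite signr_eq0.
- rewrite char_poly_comp_oppX.
  by rewrite (char_polyN_anticomm (chiral_mx_unit R m) (chiral_mx_anticomm m c)).
Qed.

Lemma Htil_eigenvalue_gap (R : realType) (m : nat) (c l : R) :
  0 <= c -> eigenvalue (Htil m c) l -> ~ (- (2 * `|c - 1|) < l < 2 * `|c - 1|).
Proof.
move=> c_ge0 eig.
have l2_ge : 4 * (c - 1) ^+ 2 <= l ^+ 2.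
  apply: (eigenvalue_sqr_ge (Htil_sqr m c) _ eig) => v.
  by rewrite -scalemxAr -scalemxAl mxE mulr_ge0 ?gap_defect_quad_ge0 //; lra.
have norm2 : `|c - 1| ^+ 2 = (c - 1) ^+ 2 by rewrite real_normK ?num_real.
have norm_ge0 := normr_ge0 (c - 1).
by case/andP; nra.
Qed.

Section RowShift.
Variables (R : realType) (m : nat) (f : nat -> R).
Local Notation w := (\row_(k < m) f k).

Local Ltac row_entry := apply/rowP => j; rewrite !mxE; under eq_bigr do rewrite !mxE.
Local Ltac settle_row_entry :=
  rewrite /ind; have := ltn_ord j; repeat case: ifP => ?; rewrite ?mulr1 ?mulr0 //; lia.

Lemma row_mul_shift : w *m shift_mx R m = \row_(j < m) if (0 < j)%N then f j.-1 else 0.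
Proof.
row_entry; rewrite (@sum_mul_ind _ _ f _ j.-1 (0 < j)%N); last by move=> k; lia.
settle_row_entry.
Qed.
Lemma row_mul_tr_shift :
  w *m (shift_mx R m)^T = \row_(j < m) if (j.+1 < m)%N then f j.+1 else 0.
Proof.
row_entry; rewrite (@sum_mul_ind _ _ f _ j.+1 true); last by move=> k; lia.
settle_row_entry.
Qed.
Lemma row_mul_E11 : w *m E11 R m = \row_(j < m) if j == 0 :> nat then f 0 else 0.
Proof.
row_entry; rewrite (@sum_mul_ind _ _ f _ 0 (j == 0 :> nat)); last by move=> k; lia.
settle_row_entry.
Qed.
Lemma row_mul_Emm : w *m Emm R m = \row_(j < m) if j == m.-1 :> nat then f m.-1 else 0.
Proof.
row_entry; rewrite (@sum_mul_ind _ _ f _ m.-1 (j == m.-1 :> nat)); last by move=> k; lia.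
settle_row_entry.
Qed.
End RowShift.

Section EdgeMode.
Variable R : realType.

Lemma sinB_add_sinD (a t : R) : sin (a - t) + sin (a + t) = 2 * sin a * cos t.
Proof. by rewrite sinB sinD; ring. Qed.

Definition edge_angle (m : nat) : R := pi / (4 * m%:R).

Definition edge_coef (m i : nat) : R := (-1) ^+ i * sin ((2 * i%:R + 1) * edge_angle m).

Definition edge_mode (m : nat) : 'rV[R]_m := \row_(i < m) edge_coef m i.

Lemma edge_mode_Atil m : (2 <= m)%N ->
  edge_mode m *m Atil R m = (- 2 * cos (2 * edge_angle m)) *: edge_mode m.
Proof.
move=> m_ge2; rewrite /edge_mode Atil_shift mulmxBr !mulmxDr.
rewrite row_mul_shift row_mul_tr_shift row_mul_E11 row_mul_Emm.
apply/rowP => j; rewrite !mxE /edge_coef.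
set p := edge_angle m.
case: j => [[|i] lt_im] /=.
- rewrite (_ : (0 == m.-1) = false); last by lia.
  rewrite (_ : (1 < m)%N = true); last by lia.
  rewrite expr0 expr1 mul1r mulN1r.
  have -> : (2 * 0%:R + 1) * p = p by ring.
  have -> : (2 * 1%:R + 1) * p = p + 2 * p by ring.
  have := sinB_add_sinD p (2 * p).
  by rewrite (_ : p - 2 * p = - p) ?sinN; [lra | ring].
- set a := (2 * i.+1%:R + 1) * p.
  have -> : (2 * i%:R + 1) * p = a - 2 * p by rewrite /a; ring.
  have sin_sum := sinB_add_sinD a (2 * p).
  case: (ltnP i.+2 m) => i_m /=.
  + rewrite (_ : (i.+1 == m.-1) = false); last by lia.
    have -> : (2 * i.+2%:R + 1) * p = a + 2 * p by rewrite /a; ring.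
    have -> : sin (a + 2 * p) = 2 * sin a * cos (2 * p) - sin (a - 2 * p) by lra.
    by rewrite !exprS; ring.
  + have m_eq : m = i.+2 by lia.
    rewrite (_ : (i.+1 == m.-1) = true); last by lia.
    rewrite (_ : m.-1 = i.+1); last by lia.
    (* the last angle is pi/2 - p, which is what makes the corner term -F fit *)
    have a_eq : a = pi / 2 - p.
      rewrite /a /p /edge_angle m_eq; field.
      by apply/eqP => h0; have := ler0n R i; lra.
    have sin_a : sin a = cos p by rewrite a_eq -opprB sinN sinBpihalf opprK.
    have sin_a2 : sin (a + 2 * p) = cos p.
      by rewrite a_eq (_ : pi / 2 - p + 2 * p = p + pi / 2) ?sinDpihalf //; ring.
    have -> : sin (a - 2 * p) = 2 * cos p * cos (2 * p) - cos p.
      by move: sin_sum; rewrite sin_a sin_a2; lra.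
    by rewrite sin_a !exprS; ring.
Qed.

Lemma edge_mode_neq0 m : (0 < m)%N -> edge_mode m != 0.
Proof.
move=> m_gt0; apply/negP => /eqP/rowP/(_ (Ordinal m_gt0)).
rewrite !mxE /edge_coef /= expr0 mul1r mulr0 add0r mul1r; apply/eqP.
have m_ge1 : 1 <= m%:R :> R by rewrite ler1n.
apply/lt0r_neq0/sin_gt0_pihalf; rewrite /edge_angle.
have pi_gt0 := @pi_gt0 R.
rewrite divr_gt0 ?mulr_gt0 //=; last lra.
rewrite ltr_pdivrMr; nra.
Qed.

Lemma Htil_sqr_edge_mode m c : (2 <= m)%N ->
  row_mx (edge_mode m) 0 *m (Htil m c *m Htil m c)
  = (4 * (c - 1) ^+ 2 + 4 * c * (2 - 2 * cos (2 * edge_angle m)))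
      *: row_mx (edge_mode m) (0 : 'rV_m).
Proof.
move=> m_ge2; rewrite Htil_sqr mulmxDr mul_mx_scalar -scalemxAr /gap_defect_mx.
rewrite mul_row_block !mulmx0 !mul0mx !addr0 mulmxDr edge_mode_Atil // mul_mx_scalar.
rewrite !scale_row_mx add_row_mx !scaler0 addr0 -scalerDl scalerA -scalerDl.
by congr (row_mx (_ *: _) _); ring.
Qed.

Lemma Htil_eigenvalue_edge m c : (2 <= m)%N -> 0 <= c ->
  exists2 lam, eigenvalue (Htil m c) lam &
    lam ^+ 2 = 4 * (c - 1) ^+ 2 + 4 * c * (2 - 2 * cos (2 * edge_angle m)).
Proof.
move=> m_ge2 c_ge0; set nu := _ + _.
have nu_ge0 : 0 <= nu.
  by have := cos_le1 (2 * edge_angle m); have := sqr_ge0 (c - 1); rewrite /nu; nra.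
have mode_neq0 : row_mx (edge_mode m) (0 : 'rV_m) != 0.
  by rewrite row_mx_eq0 negb_and edge_mode_neq0 //; apply: leq_trans m_ge2.
have := Htil_sqr_edge_mode c m_ge2; rewrite -/nu -(sqr_sqrtr nu_ge0).
case/(eigenvalue_of_sqr mode_neq0) => eig; [exists (Num.sqrt nu) | exists (- Num.sqrt nu)];
  by rewrite ?sqrrN ?sqr_sqrtr.
Qed.

Lemma one_sub_cos_pihalf_exp2 k : 1 - cos (pi / 2 / 2 ^+ k : R) <= 1 / 2 ^+ k.
Proof.
(* halving an angle in [0, pi/2] at least halves 1 - cos, as
   1 - cos (2 y) = 2 (1 - cos y) (1 + cos y) *)
elim: k => [|k IH]; first by rewrite expr0 !divr1 cos_pihalf subr0.
set y := pi / 2 / 2 ^+ k.+1.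
have y2 : pi / 2 / 2 ^+ k = y *+ 2.
  by rewrite /y exprS [_ *+ 2]mulr2n; field; apply: expf_neq0; lra.
rewrite y2 cos_mulr2n in IH.
have pow_gt0 : 0 < 2 ^+ k :> R by apply: exprn_gt0; lra.
have y_ge0 : 0 <= y by rewrite /y !divr_ge0 ?pi_ge0 ?exprn_ge0.
have y_le : y <= pi / 2.
  rewrite /y ler_pdivrMr ?exprn_gt0 //.
  have : 1 <= 2 ^+ k.+1 :> R by apply: exprn_ege1; lra.
  by have := @pi_ge0 R; nra.
have cos_ge0 : 0 <= cos y.
  by apply: cos_ge0_pihalf; rewrite y_le andbT (le_trans _ y_ge0) // oppr_le0 divr_ge0 ?pi_ge0.
have := cos_le1 y; rewrite exprS.
have -> : 1 / (2 * 2 ^+ k) = (1 / 2 ^+ k) / 2 :> R by field; lra.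
nra.
Qed.

Lemma edge_gap_exp2 k :
  2 - 2 * cos (2 * edge_angle (2 ^ k)) <= 2 / 2 ^+ k.
Proof.
have pow_gt0 : 0 < 2 ^+ k :> R by apply: exprn_gt0; lra.
have -> : 2 * edge_angle (2 ^ k) = pi / 2 / 2 ^+ k.
  by rewrite /edge_angle natrX; field; rewrite gt_eqF.
have := one_sub_cos_pihalf_exp2 k.
have -> : 2 / 2 ^+ k = 2 * (1 / 2 ^+ k) :> R by rewrite mulrA mulr1.
lra.
Qed.
End EdgeMode.

Lemma Htil_eigenvalue_near_gap (R : realType) (c eps : R) : 0 <= c -> 0 < eps ->
  exists (m : nat) (lam : R), eigenvalue (Htil m c) lam /\
    - (2 * `|c - 1|) - eps < lam < 2 * `|c - 1| + eps.
Proof.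
move=> c_ge0 eps_gt0.
set K := 8 * c / eps ^+ 2.
have K_ge0 : 0 <= K by rewrite /K divr_ge0 ?sqr_ge0 //; lra.
set k := (Num.bound K).+1.
have pow_gt0 : 0 < 2 ^+ k :> R by apply: exprn_gt0; lra.
have K_lt : K < 2 ^+ k.
  apply: (lt_trans (archi_boundP K_ge0)); rewrite -natrX ltr_nat.
  by rewrite (ltn_trans (ltn_expl _ (isT : (1 < 2)%N))) // ltn_exp2l.
have m_ge2 : (2 <= 2 ^ k)%N by rewrite expnS leq_pmulr ?expn_gt0.
have [lam eig lam2] := Htil_eigenvalue_edge m_ge2 c_ge0.
have gap_small : 4 * c * (2 - 2 * cos (2 * edge_angle R (2 ^ k))) < eps ^+ 2.
  have gap_ge := edge_gap_exp2 R k.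
  rewrite /K ltr_pdivrMr ?exprn_gt0 // in K_lt.
  apply: (le_lt_trans (y := 4 * c * (2 / 2 ^+ k))); first by apply: ler_wpM2l => //; lra.
  by rewrite mulrA ltr_pdivrMr //; lra.
exists (2 ^ k)%N, lam; split => //.
have norm_ge0 := normr_ge0 (c - 1).
have norm2 : `|c - 1| ^+ 2 = (c - 1) ^+ 2 by rewrite real_normK ?num_real.
have cos_le := cos_le1 (2 * edge_angle R (2 ^ k)).
by apply/andP; split; nra.
Qed.

Theorem theorem6p2 (R : realType) :
  (forall (m : nat) (c : R), 0 <= c ->
     (forall lam : R,
        mup lam (char_poly (Htil m c)) = mup (- lam) (char_poly (Htil m c)))
     /\ (forall lam : R, eigenvalue (Htil m c) lam ->
           ~ (- (2 * `|c - 1|) < lam < 2 * `|c - 1|)))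
  /\ (forall (c : R), 0 <= c -> forall eps : R, 0 < eps ->
        exists (m : nat) (lam : R), eigenvalue (Htil m c) lam /\
          - (2 * `|c - 1|) - eps < lam < 2 * `|c - 1| + eps).
Proof.
split.
- move=> m c c_ge0; split=> lam.
  + exact: Htil_mup_oppr.
  + exact: Htil_eigenvalue_gap.
- move=> c c_ge0 eps eps_gt0; exact: Htil_eigenvalue_near_gap.
Qed.
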